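(* For any $S\ge1$, $Q\ge0$ and $x\in\mathbb{R}$, $$\psi(x,S,Q)<S|x|\big[2\ln(1+2x^2)+3Q+3S\big].$$
   Context: For $\theta\in\mathbb{R}$, $S>0$, $Q\ge0$: $\psi^*(\theta,S,Q)=\exp\big(\max_{\beta\in[-1/2,1/2]}(\theta\beta-\beta^2S^2)-Q\big)$, and $\psi(x,S,Q)=\sup_{\theta\in\mathbb{R}}(\theta x-\psi^*(\theta,S,Q))$. *)

From HB Require Import structures.
From mathcomp Require Import all_boot all_order all_algebra.
From mathcomp Require Import all_classical all_reals all_analysis.
Set Implicit Arguments. Unset Strict Implicit. Unset Printing Implicit Defensive.
Import Order.TTheory GRing.Theory Num.Theory.
Local Open Scope classical_set_scope.
Local Open Scope ring_scope.

(* max_{beta in [-1/2,1/2]} (theta*beta - beta^2 S^2), as a supremum over a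
   compact interval (the maximum is attained by continuity). *)
Definition inner_max {R : realType} (theta S : R) : R :=
  sup [set theta * b - b ^+ 2 * S ^+ 2 | b in `[(-(1/2)) : R, 1/2]%classic].

Definition psistar {R : realType} (theta S Q : R) : R :=
  expR (inner_max theta S - Q).

(* psi(x,S,Q) = sup_theta (theta x - psi^*(theta,S,Q)), taken in the extended
   reals so that no finiteness is presupposed. *)
Definition psi {R : realType} (x S Q : R) : \bar R :=
  ereal_sup [set ((theta * x - psistar theta S Q)%:E) | theta in [set: R]].

From HB Require Import structures.
From mathcomp Require Import all_boot all_order all_algebra.
From mathcomp Require Import all_classical all_reals all_analysis.
From mathcomp Require Import ring lra.
Set Implicit Arguments. Unset Strict Implicit.
Import Order.TTheory GRing.Theory Num.Theory.
Local Open Scope ring_scope.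

(* Choosing beta = sign(theta)/2 in the inner maximum gives
   psi^*(theta,S,Q) >= exp(|theta|/2 - c) with c = S^2/4 + Q, so every term
   theta x - psi^*(theta,S,Q) of the supremum defining psi is at most
   t a - exp(t/2 - c) with t = |theta| and a = |x|.  For a > 0 the tangent-line
   (Fenchel-Young) inequality  exp y >= b (1 + y - ln b)  at slope b = 2a bounds
   this by the constant 2a (c + ln(2a) - 1); for a = 0 it is at most -exp(-c).
   It then remains to compare constants: ln(2a) <= ln(1 + 2x^2) because
   2a <= 1 + 2a^2, and S >= 1, Q >= 0 absorb everything else. *)

(* Taking beta = sign(theta)/2 in the inner maximum; the objective is bounded
   above by |theta|/2 on [-1/2, 1/2], so the supremum is a genuine one. *)
Lemma inner_max_ge (R : realType) (th S : R) :
  `|th| / 2 - S ^+ 2 / 4 <= inner_max th S.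
Proof.
pose b0 : R := if 0 <= th then 1/2 else -(1/2).
have -> : `|th| / 2 - S ^+ 2 / 4 = th * b0 - b0 ^+ 2 * S ^+ 2.
  rewrite /b0; case: ifPn => h.
    by rewrite ger0_norm // expr2; lra.
  by rewrite ltr0_norm ?ltNge // !expr2; lra.
apply: ub_le_sup; last first.
  by exists b0 => //; rewrite /= in_itv /= /b0; case: ifP => _; apply/andP; split; lra.
exists (`|th| / 2) => _ [b /= + <-]; rewrite in_itv /= => /andP [h1 h2].
have hb : `|b| <= 1/2 by rewrite ler_norml h1 h2.
have : th * b <= `|th| * `|b| by rewrite -normrM ler_norm.
have : `|th| * `|b| <= `|th| * (1/2) by rewrite ler_wpM2l.
have : 0 <= b ^+ 2 * S ^+ 2 by rewrite mulr_ge0 // sqr_ge0.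
lra.
Qed.

Lemma psistar_ge (R : realType) (th S Q : R) :
  expR (`|th| / 2 - (S ^+ 2 / 4 + Q)) <= psistar th S Q.
Proof. by rewrite /psistar ler_expR; have := inner_max_ge th S; lra. Qed.

Lemma expR_ge_tangent (R : realType) (y b : R) : 0 < b ->
  b * (1 + y - ln b) <= expR y.
Proof.
move=> hb.
have -> : expR y = b * expR (y - ln b).
  by rewrite expRD expRN lnK ?posrE // mulrCA divff ?mulr1 // gt_eqF.
by rewrite ler_pM2l //; have := expR_ge1Dx (y - ln b); lra.
Qed.

Lemma psi0_le (R : realType) (S Q : R) :
  (psi 0 S Q <= (- expR (- (S ^+ 2 / 4 + Q)))%:E)%E.
Proof.
apply: ge_ereal_sup => _ [th _ <-]; rewrite lee_fin mulr0 sub0r lerN2.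
apply: le_trans (psistar_ge th S Q); rewrite ler_expR.
by have := normr_ge0 th; lra.
Qed.

Lemma psi_le (R : realType) (x S Q : R) : x != 0 ->
  (psi x S Q <= (2 * `|x| * (S ^+ 2 / 4 + Q + ln (2 * `|x|) - 1))%:E)%E.
Proof.
move=> x0; have hx : 0 < 2 * `|x| by rewrite mulr_gt0 // normr_gt0.
apply: ge_ereal_sup => _ [th _ <-]; rewrite lee_fin.
have hpsi := psistar_ge th S Q.
have htan := expR_ge_tangent (`|th| / 2 - (S ^+ 2 / 4 + Q)) hx.
have : th * x <= `|th| * `|x| by rewrite -normrM ler_norm.
lra.
Qed.

(* ln(2|x|) <= ln(1 + 2x^2), since 1 - 2a + 2a^2 > 0. *)
Lemma ln_double_norm_le (R : realType) (x : R) : x != 0 ->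
  ln (2 * `|x|) <= ln (1 + 2 * x ^+ 2).
Proof.
move=> x0; have ha : 0 < `|x| by rewrite normr_gt0.
have hx2 : 0 <= x ^+ 2 := sqr_ge0 x.
rewrite ler_ln ?posrE; [|lra|lra].
rewrite -real_normK ?num_real //.
by have := sqr_ge0 (`|x| - 1); rewrite !expr2; nra.
Qed.

(* The final comparison of constants, with a = |x|, L1 = ln(2a), L2 = ln(1+2x^2). *)
Lemma constant_lt (R : realType) (a S Q L1 L2 : R) :
  0 < a -> 1 <= S -> 0 <= Q -> 0 <= L2 -> L1 <= L2 ->
  2 * a * (S ^+ 2 / 4 + Q + L1 - 1) < S * a * (2 * L2 + 3 * Q + 3 * S).
Proof.
move=> ha hS hQ hL2 hL.
have -> : S * a * (2 * L2 + 3 * Q + 3 * S) = a * (S * (2 * L2 + 3 * Q + 3 * S))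
  by ring.
have -> : 2 * a * (S ^+ 2 / 4 + Q + L1 - 1) = a * (S ^+ 2 / 2 + 2 * Q + 2 * L1 - 2)
  by field.
rewrite ltr_pM2l // expr2.
have hSL : L2 <= S * L2 by rewrite ler_peMl.
have hSQ : Q <= S * Q by rewrite ler_peMl.
have hSS : 1 <= S * S by rewrite mulr_ege1.
lra.
Qed.

Theorem lemma12 (R : realType) (S Q x : R) (hS : 1 <= S) (hQ : 0 <= Q) :
  (psi x S Q < (S * `|x| * (2 * ln (1 + 2 * x ^+ 2) + 3 * Q + 3 * S))%:E)%E.
Proof.
have [-> | x0] := eqVneq x 0.
  apply: le_lt_trans (psi0_le S Q) _.
  by rewrite lte_fin normr0 mulr0 mul0r oppr_lt0 expR_gt0.
apply: le_lt_trans (psi_le S Q x0) _; rewrite lte_fin.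
apply: constant_lt => //; first by rewrite normr_gt0.
- by apply: ln_ge0; have := sqr_ge0 x; lra.
- exact: ln_double_norm_le.
Qed.
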